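(* Let $\Theta\subseteq\mathbb{R}^d$ be a $C^3$ hypersurface for which there exists $\varepsilon_0>0$ such that every $x\in\mathbb{R}^d$ with $d(x,\Theta)<\varepsilon_0$ has a unique point $p\in\Theta$ with $\|x-p\|=d(x,\Theta)$. Then for all $x,y\in\mathbb{R}^d$ and $\eta>0$ there exists a continuous curve $\gamma$ from $x$ to $y$ with $\ell(\gamma)<\|x-y\|+\eta$ such that $\gamma$ intersects $\Theta$ in only finitely many points.
   Context: A hypersurface is a $(d-1)$-dimensional submanifold of $\mathbb{R}^d$. $d(x,\Theta)=\inf_{y\in\Theta}\|x-y\|$. Length of a continuous curve $\gamma:[0,1]\to\mathbb{R}^d$: $\ell(\gamma)=\sup\sum_k\|\gamma(t_k)-\gamma(t_{k-1})\|$ over partitions of $[0,1]$. *)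

From HB Require Import structures.
From mathcomp Require Import all_boot all_order all_algebra.
From mathcomp Require Import all_classical all_reals all_analysis.
Set Implicit Arguments. Unset Strict Implicit. Unset Printing Implicit Defensive.
Import Order.TTheory GRing.Theory Num.Theory.
Import numFieldNormedType.Exports.
Local Open Scope classical_set_scope.
Local Open Scope ring_scope.

(* Euclidean norm on R^d (the library's norm on matrices is the max norm). *)
Definition eucl_norm {R : realType} {d : nat} (x : 'rV[R]_d) : R :=
  Num.sqrt (\sum_(i < d) x ord0 i ^+ 2).

(* d(x, A) = inf_{y in A} ||x - y||, in the extended reals (= +oo if A empty) *)
Definition dist_to {R : realType} {d : nat} (x : 'rV[R]_d) (A : set 'rV[R]_d) : \bar R :=
  ereal_inf [set (eucl_norm (x - y))%:E | y in A].

Fixpoint isCk {R : realType} {d : nat} (k : nat) (f : 'rV[R]_d -> R) : Prop :=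
  match k with
  | 0%N => continuous f
  | k'.+1 => (forall x, differentiable f x) /\
             (forall v : 'rV[R]_d, isCk k' (fun x => 'D_v f x))
  end.

Definition Ck_hypersurface {R : realType} {d : nat} (k : nat) (A : set 'rV[R]_d) : Prop :=
  forall p, A p ->
    exists (U : set 'rV[R]_d) (f : 'rV[R]_d -> R),
      [/\ open U, U p, isCk k f, (exists v : 'rV[R]_d, 'D_v f p != 0) &
          A `&` U = [set x | U x /\ f x = 0]].

Definition curve_length {R : realType} {d : nat} (g : R -> 'rV[R]_d) : \bar R :=
  ereal_sup [set l | exists (n : nat) (t : nat -> R),
     [/\ t 0%N = 0, t n = 1, (forall k, (k < n)%N -> t k <= t k.+1) &
         l = (\sum_(k < n) eucl_norm (g (t k.+1) - g (t k)))%:E]].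

From HB Require Import structures.
From mathcomp Require Import all_boot all_order all_algebra.
From mathcomp Require Import all_classical all_reals all_analysis.
From mathcomp Require Import ring lra.
Import Order.TTheory GRing.Theory Num.Theory.
Import numFieldNormedType.Exports.
Local Open Scope classical_set_scope.
Local Open Scope ring_scope.

(* Only two consequences of the hypotheses are used: Theta is closed (a point
   of its closure is at distance 0 from Theta, hence is its own nearest point),
   and Theta is locally the regular zero set of a C^1 function f.  Follow the
   segment x + t u, u = y - x.  Near a parameter t0 with x + t0 u off Theta the
   segment misses Theta; if the segment is transverse to Theta there
   (D_u f <> 0), the mean value theorem lets a short piece of it meet Theta at
   most once; at a tangency (D_u f = 0, D_v f <> 0) a short piece [a, b] is
   replaced by a detour up by s v, across and down again, with s a small
   multiple of b - a, so that the detour has length at most (b - a) (|u| + del).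
   A supremum argument on [0, 1] chains these local paths, whose Lipschitz
   constants add up. *)

Section EuclideanNorm.
Context {R : realType} {d : nat}.
Implicit Types x y : 'rV[R]_d.
Local Notation en := (@eucl_norm R d).

Lemma eucl_norm_ge0 x : 0 <= en x.
Proof. exact: sqrtr_ge0. Qed.

Lemma eucl_norm_sqr x : en x ^+ 2 = \sum_(i < d) x ord0 i ^+ 2.
Proof. by rewrite sqr_sqrtr // sumr_ge0 // => i _; rewrite sqr_ge0. Qed.

Lemma eucl_normZ (c : R) x : en (c *: x) = `|c| * en x.
Proof.
rewrite /eucl_norm; under eq_bigr do rewrite mxE exprMn.
by rewrite -mulr_sumr sqrtrM ?sqr_ge0 // sqrtr_sqr.
Qed.

Lemma eucl_distC x y : en (x - y) = en (y - x).
Proof. by rewrite -opprB -scaleN1r eucl_normZ normrN normr1 mul1r. Qed.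

Lemma ler_entry_eucl_norm x i : `|x ord0 i| <= en x.
Proof.
rewrite /eucl_norm -sqrtr_sqr ler_sqrt ?sumr_ge0 // => [|j _]; last exact: sqr_ge0.
by rewrite (bigD1 i) //= lerDl sumr_ge0 // => j _; rewrite sqr_ge0.
Qed.

Lemma ler_norm_eucl_norm x : `|x| <= en x.
Proof.
rewrite -[`|x|]/(mx_norm x) mx_normrE.
apply/bigmax_leP; split; first exact: eucl_norm_ge0.
by move=> [i j] _ /=; rewrite (ord1 i); apply: ler_entry_eucl_norm.
Qed.

Lemma ler_eucl_norm_norm x : en x <= Num.sqrt d%:R * `|x|.
Proof.
rewrite -[`|x|]ger0_norm // -sqrtr_sqr -sqrtrM // ler_sqrt ?mulr_ge0 //.
have -> : d%:R * `|x| ^+ 2 = \sum_(i < d) `|x| ^+ 2.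
  by rewrite sumr_const card_ord mulr_natl.
apply: ler_sum => i _; rewrite -real_normK ?num_real // lerXn2r ?nnegrE //.
rewrite -[`|x|]/(mx_norm x) mx_normrE.
exact: (le_bigmax _ (fun ij : 'I_1 * 'I_d => `|x ij.1 ij.2|) (ord0, i)).
Qed.

Lemma ler_dot_eucl_norm x y : \sum_(i < d) x ord0 i * y ord0 i <= en x * en y.
Proof.
set S := \sum_(i < d) _.
have expand : \sum_(i < d) (en y * x ord0 i - en x * y ord0 i) ^+ 2 =
    en y ^+ 2 * \sum_(i < d) x ord0 i ^+ 2 + en x ^+ 2 * \sum_(i < d) y ord0 i ^+ 2
    - 2 * (en x * en y) * S.
  by rewrite /S !mulr_sumr -big_split -sumrB /=; apply: eq_bigr => i _; ring.
have : 0 <= 2 * (en x * en y) * (en x * en y - S).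
  rewrite (_ : _ * (_ - S) = \sum_(i < d) (en y * x ord0 i - en x * y ord0 i) ^+ 2).
    by rewrite sumr_ge0 // => i _; rewrite sqr_ge0.
  by rewrite expand -!eucl_norm_sqr; ring.
have [xy_gt0|xy_le0] := ltrP 0 (en x * en y).
  by rewrite pmulr_rge0 ?subr_ge0 // mulr_gt0.
have entry0 (z : 'rV[R]_d) : en z = 0 -> forall i, z ord0 i = 0.
  by move=> z0 i; apply/eqP; rewrite -normr_le0 -z0 ler_entry_eucl_norm.
move=> _; have /orP[/eqP/entry0 x0|/eqP/entry0 y0] : (en x == 0) || (en y == 0).
  by rewrite -mulf_eq0 eq_le xy_le0 mulr_ge0 ?eucl_norm_ge0.
- by rewrite /S big1 ?mulr_ge0 ?eucl_norm_ge0 // => i _; rewrite x0 mul0r.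
- by rewrite /S big1 ?mulr_ge0 ?eucl_norm_ge0 // => i _; rewrite y0 mulr0.
Qed.

Lemma ler_eucl_normD x y : en (x + y) <= en x + en y.
Proof.
rewrite -(ger0_norm (addr_ge0 (eucl_norm_ge0 x) (eucl_norm_ge0 y))) -sqrtr_sqr.
rewrite /eucl_norm ler_sqrt ?sqr_ge0 //.
have -> : \sum_(i < d) (x + y) ord0 i ^+ 2 = \sum_(i < d) x ord0 i ^+ 2 +
    \sum_(i < d) y ord0 i ^+ 2 + 2 * \sum_(i < d) x ord0 i * y ord0 i.
  by rewrite mulr_sumr -!big_split /=; apply: eq_bigr => i _; rewrite mxE; ring.
rewrite -/(en x) -/(en y) -!eucl_norm_sqr.
have := ler_dot_eucl_norm x y; rewrite -/(en x) -/(en y).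
move: (en x) (en y) => a b CS.
have -> : (a + b) ^+ 2 = a ^+ 2 + b ^+ 2 + 2 * (a * b) by ring.
by rewrite lerD2l ler_pM2l.
Qed.

End EuclideanNorm.

Section Regularity.
Context {R : realType} {d : nat}.

Lemma isCkS k (f : 'rV[R]_d -> R) : isCk k.+1 f -> isCk k f.
Proof.
elim: k f => [|k IH] f [df dDf] /=; first by move=> x; apply: differentiable_continuous.
by split=> // v; apply: IH.
Qed.

Lemma isCk_le k k' (f : 'rV[R]_d -> R) : (k <= k')%N -> isCk k' f -> isCk k f.
Proof.
elim: k' => [|k' IH]; first by rewrite leqn0 => /eqP ->.
by rewrite leq_eqVlt ltnS => /orP[/eqP -> //|/IH fk /isCkS].
Qed.

Lemma Ck_hypersurface_le k k' (A : set 'rV[R]_d) :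
  (k <= k')%N -> Ck_hypersurface k' A -> Ck_hypersurface k A.
Proof.
move=> kk' hA p Ap; have [U [f [oU Up fk' Df hU]]] := hA p Ap.
by exists U, f; split=> //; apply: isCk_le fk'.
Qed.

End Regularity.

Lemma closed_of_nearest_points {R : realType} {d : nat} {A : set 'rV[R]_d} {eps0 : R} :
  0 < eps0 ->
  (forall x, (dist_to x A < eps0%:E)%E ->
     exists2 p, A p & (eucl_norm (x - p))%:E = dist_to x A) ->
  closed A.
Proof.
move=> eps0_gt0 nearest p clAp.
have dist_small e : 0 < e -> (dist_to p A <= e%:E)%E.
  move=> e_gt0; set r := e / (Num.sqrt d%:R + 1).
  have r_gt0 : 0 < r by rewrite divr_gt0 // ltr_wpDl.
  have [z [Az pz]] := clAp _ (nbhsx_ballx p r r_gt0).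
  apply: le_trans (ereal_inf_lbound _) _; first by exists z.
  have pz_lt : `|p - z| < r by move: pz; rewrite -ball_normE.
  rewrite lee_fin; apply: le_trans (ler_eucl_norm_norm _) _.
  apply: le_trans (ler_wpM2l (sqrtr_ge0 _) (ltW pz_lt)) _.
  rewrite mulrA ler_pdivrMr ?ltr_wpDl // mulrDr mulr1 mulrC lerDl.
  exact: ltW.
have [q Aq pq] : exists2 q, A q & (eucl_norm (p - q))%:E = dist_to p A.
  apply: nearest; apply: le_lt_trans (dist_small _ (divr_gt0 eps0_gt0 (ltr0n _ 2))) _.
  by rewrite lte_fin ltr_pdivrMr // ltr_pMr // ltr1n.
suff /subr0_eq -> : p - q = 0 by [].
apply/eqP; rewrite -normr_le0; apply: le_trans (ler_norm_eucl_norm _) _.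
apply/ler_addgt0Pr => e e_gt0; rewrite add0r -lee_fin pq.
exact: dist_small.
Qed.

Lemma finite_set_subsingleton (T : Type) (A : set T) :
  (forall z1 z2, A z1 -> A z2 -> z1 = z2) -> finite_set A.
Proof.
move=> A1; have [[z0 Az0]|nA] := pselect (exists z, A z).
  by apply: (sub_finite_set _ (finite_set1 z0)) => z Az; apply: A1.
by apply: (sub_finite_set _ (finite_set0 T)) => z Az; apply: nA; exists z.
Qed.

Section LipschitzPaths.
Context {R : realType} {d : nat}.
Local Notation en := (@eucl_norm R d).
Implicit Types (z w : 'rV[R]_d) (g : R -> 'rV[R]_d).

Definition lipschitz_path (L : R) g :=
  forall s t, s <= t -> en (g t - g s) <= L * (t - s).

Lemma lipschitz_path_le L L' g : L <= L' -> lipschitz_path L g -> lipschitz_path L' g.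
Proof.
move=> LL' gL s t st; apply: le_trans (gL _ _ st) _.
by rewrite ler_wpM2r // subr_ge0.
Qed.

Lemma lipschitz_pathC L g :
  lipschitz_path L g -> forall s t, en (g t - g s) <= L * `|t - s|.
Proof.
move=> gL s t; have [st|ts] := lerP s t; first exact: gL.
by rewrite eucl_distC gL // ltW.
Qed.

Lemma lipschitz_path_continuous L g : 0 < L -> lipschitz_path L g -> continuous g.
Proof.
move=> L_gt0 /lipschitz_pathC gL t; apply/cvgrPdist_lt => e e_gt0.
have : \forall s \near t, `|t - s| < e / L.
  exact: (@cvgr_dist_lt _ R^o _ (nbhs t) _ id t cvg_id _ (divr_gt0 e_gt0 L_gt0)).
apply: filterS => s ts; apply: le_lt_trans (ler_norm_eucl_norm _) _.
by apply: le_lt_trans (gL _ _) _; rewrite mulrC -ltr_pdivlMr.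
Qed.

Lemma curve_length_lipschitz L g : lipschitz_path L g -> (curve_length g <= L%:E)%E.
Proof.
move=> gL; apply: ge_ereal_sup => _ [n [t [t0 tn t_mono ->]]]; rewrite lee_fin.
apply: le_trans (_ : \sum_(k < n) L * (t k.+1 - t k) <= L).
  by apply: ler_sum => k _; apply/gL/t_mono.
rewrite -mulr_sumr -(big_mkord xpredT (fun k => t k.+1 - t k)) telescope_sumr //.
by rewrite tn t0 subr0 mulr1.
Qed.

Lemma lipschitz_path_rev L g : lipschitz_path L g -> lipschitz_path L (fun t => g (1 - t)).
Proof.
move=> gL s t st; rewrite eucl_distC (_ : t - s = (1 - s) - (1 - t)); last by ring.
by apply: gL; rewrite lerD2l lerN2.
Qed.

Definition path_cat (l : R) g1 g2 t :=
  if t <= l then g1 (t / l) else g2 ((t - l) / (1 - l)).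

Lemma lipschitz_path_cat L1 L2 g1 g2 : 0 < L1 -> 0 < L2 -> g1 1 = g2 0 ->
  lipschitz_path L1 g1 -> lipschitz_path L2 g2 ->
  lipschitz_path (L1 + L2) (path_cat (L1 / (L1 + L2)) g1 g2).
Proof.
move=> L1_gt0 L2_gt0 g12 g1L g2L; set l := L1 / (L1 + L2).
have L_gt0 : 0 < L1 + L2 by rewrite addr_gt0.
have l_gt0 : 0 < l by rewrite divr_gt0.
have l_lt1 : l < 1 by rewrite ltr_pdivrMr // mul1r ltrDl.
have L1l : L1 / l = L1 + L2 by rewrite invf_div mulrCA divff ?mulr1 ?gt_eqF.
have L2l : L2 / (1 - l) = L1 + L2.
  rewrite (_ : 1 - l = L2 / (L1 + L2)); last by rewrite /l; field; rewrite gt_eqF.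
  by rewrite invf_div mulrCA divff ?mulr1 ?gt_eqF.
move=> s t st; rewrite /path_cat.
have [sl|ls] := lerP s l; have [tl|lt] := lerP t l.
- apply: le_trans (g1L _ _ _) _; first by rewrite ler_pM2r ?invr_gt0.
  by rewrite -mulrBl mulrA -L1l mulrAC.
- rewrite -[X in X - _](subrK (g1 1)) -addrA.
  apply: le_trans (ler_eucl_normD _ _) _; rewrite {1}g12.
  apply: le_trans (lerD (g2L _ _ _) (g1L _ _ _)) _.
  + by rewrite divr_ge0 ?subr_ge0 ?ltW.
  + by rewrite ler_pdivrMr // mul1r.
  + have -> : L2 * ((t - l) / (1 - l) - 0) = L2 / (1 - l) * (t - l).
      by rewrite subr0 mulrA mulrAC.
    have -> : L1 * (1 - s / l) = L1 / l * (l - s) by field; rewrite gt_eqF.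
    by rewrite L1l L2l -mulrDr addrA subrK.
- by have := lt_le_trans ls (le_trans st tl); rewrite ltxx.
- apply: le_trans (g2L _ _ _) _; first by rewrite ler_pM2r ?invr_gt0 ?subr_gt0 // lerD2r.
  by rewrite -mulrBl opprB addrA subrK mulrA -L2l mulrAC.
Qed.

Definition line_path z w (al be : R) t := z + (al + t * (be - al)) *: w.

Lemma lipschitz_line_path z w al be :
  al <= be -> lipschitz_path ((be - al) * en w) (line_path z w al be).
Proof.
move=> ab s t st; rewrite /line_path opprD addrACA subrr add0r -scalerBl.
rewrite opprD addrACA subrr add0r -mulrBl eucl_normZ normrM !ger0_norm ?subr_ge0 //.
by rewrite [leRHS]mulrC mulrA.
Qed.

End LipschitzPaths.

Definition meets_finitely {R : realType} {d : nat} (Th : set 'rV[R]_d)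
    (g : R -> 'rV[R]_d) :=
  finite_set ([set g t | t in `[0, 1]] `&` Th).

(* Requiring (L + e)-Lipschitz paths for all e > 0 allows L = 0 when a = b,
   whereas concatenation needs positive constants. *)
Definition joinable {R : realType} {d : nat} (Th : set 'rV[R]_d) (a b : 'rV[R]_d) (L : R) :=
  0 <= L /\ forall e, 0 < e -> exists g : R -> 'rV[R]_d,
    [/\ g 0 = a, g 1 = b, lipschitz_path (L + e) g & meets_finitely Th g].

Section Joinable.
Context {R : realType} {d : nat} {Th : set 'rV[R]_d}.
Local Notation en := (@eucl_norm R d).
Implicit Types (a b z w : 'rV[R]_d) (g : R -> 'rV[R]_d).

Lemma meets_finitely_rev g : meets_finitely Th g -> meets_finitely Th (fun t => g (1 - t)).
Proof.
apply: sub_finite_set => z [[t t01 <-] Tz]; split=> //; exists (1 - t) => //.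
by move: t01; rewrite /= !in_itv /= => /andP[t0 t1]; apply/andP; split; lra.
Qed.

Lemma meets_finitely_cat l g1 g2 : 0 < l -> l < 1 ->
  meets_finitely Th g1 -> meets_finitely Th g2 -> meets_finitely Th (path_cat l g1 g2).
Proof.
move=> l_gt0 l_lt1 g1F g2F.
have : finite_set (([set g1 t | t in `[0, 1]] `&` Th) `|`
                   ([set g2 t | t in `[0, 1]] `&` Th)).
  by rewrite finite_setU.
apply: sub_finite_set.
move=> z [[t /= /[!in_itv] /= /andP[t0 t1] <-]]; rewrite /path_cat.
have [tl|lt] := lerP t l => Tz; [left|right]; split=> //.
- exists (t / l) => //.
  by rewrite /= in_itv /= divr_ge0 ?(ltW l_gt0) //= ler_pdivrMr // mul1r.
- exists ((t - l) / (1 - l)) => //; rewrite /= in_itv /=.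
  apply/andP; split; first by rewrite divr_ge0 // subr_ge0 ltW.
  by rewrite ler_pdivrMr ?subr_gt0 // mul1r lerD2r.
Qed.

Lemma meets_finitely_line_path z w (al be : R) : al <= be ->
  {in `[al, be] &, forall c1 c2, Th (z + c1 *: w) -> Th (z + c2 *: w) -> c1 = c2} ->
  meets_finitely Th (line_path z w al be).
Proof.
move=> ab Th1; apply: finite_set_subsingleton.
have in_ab t : t \in `[0, 1] -> al + t * (be - al) \in `[al, be].
  rewrite !in_itv /= => /andP[t0 t1]; rewrite lerDl mulr_ge0 ?subr_ge0 //=.
  by rewrite -lerBrDl ler_piMl // subr_ge0.
move=> _ _ [[t1 /in_ab t1i <-] T1] [[t2 /in_ab t2i <-] T2].
by rewrite /line_path (Th1 _ _ t1i t2i T1 T2).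
Qed.

Lemma joinable_le {a b L L'} : joinable Th a b L -> L <= L' -> joinable Th a b L'.
Proof.
move=> [L_ge0 abJ] LL'; split=> [|e e_gt0]; first exact: le_trans LL'.
have [g [g0 g1 gL gF]] := abJ e e_gt0; exists g; split=> //.
by apply: lipschitz_path_le _ gL; rewrite lerD2r.
Qed.

Lemma joinable_line z w (al be L : R) : al <= be -> (be - al) * en w <= L ->
  {in `[al, be] &, forall c1 c2, Th (z + c1 *: w) -> Th (z + c2 *: w) -> c1 = c2} ->
  joinable Th (z + al *: w) (z + be *: w) L.
Proof.
move=> ab abL Th1; split=> [|e e_gt0].
  by apply: le_trans abL; rewrite mulr_ge0 ?subr_ge0 ?eucl_norm_ge0.
exists (line_path z w al be); split.
- by rewrite /line_path mul0r addr0.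
- by rewrite /line_path mul1r addrCA subrr addr0.
- by apply: lipschitz_path_le _ (lipschitz_line_path z w al be ab); rewrite ler_wpDr // ltW.
- exact: meets_finitely_line_path.
Qed.

Lemma joinable_refl a L : 0 <= L -> joinable Th a a L.
Proof.
move=> L_ge0; have := @joinable_line a 0 0 0 L (lexx 0).
rewrite subrr mul0r scaler0 addr0; apply=> // c1 c2.
by rewrite !in_itv /= => /andP[? ?] /andP[? ?] _ _; apply/eqP; rewrite eq_le; lra.
Qed.

Lemma joinable_sym {a b L} : joinable Th a b L -> joinable Th b a L.
Proof.
move=> [L_ge0 abJ]; split=> // e e_gt0.
have [g [g0 g1 gL gF]] := abJ e e_gt0; exists (fun t => g (1 - t)); split.
- by rewrite subr0.
- by rewrite subrr.
- exact: lipschitz_path_rev.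
- exact: meets_finitely_rev.
Qed.

Lemma joinable_trans {a b} {c : 'rV[R]_d} {L1 L2} :
  joinable Th a b L1 -> joinable Th b c L2 -> joinable Th a c (L1 + L2).
Proof.
move=> [L1_ge0 abJ] [L2_ge0 bcJ]; split=> [|e e_gt0]; first exact: addr_ge0.
have e2_gt0 : 0 < e / 2 by rewrite divr_gt0.
have [g1 [g10 g11 g1L g1F]] := abJ _ e2_gt0.
have [g2 [g20 g21 g2L g2F]] := bcJ _ e2_gt0.
have K1_gt0 : 0 < L1 + e / 2 by rewrite ltr_wpDl.
have K2_gt0 : 0 < L2 + e / 2 by rewrite ltr_wpDl.
set l := (L1 + e / 2) / (L1 + e / 2 + (L2 + e / 2)).
have K_gt0 : 0 < L1 + e / 2 + (L2 + e / 2) by rewrite addr_gt0.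
have l_gt0 : 0 < l by rewrite divr_gt0.
have l_lt1 : l < 1 by rewrite ltr_pdivrMr // mul1r ltrDl.
exists (path_cat l g1 g2); split.
- by rewrite /path_cat ltW // mul0r.
- by rewrite /path_cat leNgt l_lt1 /= divff // subr_eq0 gt_eqF.
- rewrite [e]splitr addrACA.
  by apply: lipschitz_path_cat; rewrite ?g11 ?g20.
- exact: meets_finitely_cat.
Qed.

Lemma joinable_curve {a b L e} : joinable Th a b L -> 0 < e ->
  exists g : R -> 'rV[R]_d,
    [/\ {within `[0, 1], continuous g}, g 0 = a, g 1 = b,
        (curve_length g <= (L + e)%:E)%E &
        finite_set ([set g t | t in `[0, 1]] `&` Th)].
Proof.
move=> [L_ge0 abJ] e_gt0; have [g [g0 g1 gL gF]] := abJ e e_gt0.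
exists g; split=> //; last exact: curve_length_lipschitz gL.
apply: continuous_subspaceT; apply: lipschitz_path_continuous gL.
by rewrite ltr_wpDl.
Qed.

End Joinable.

Section IncrementsAlongLines.
Context {R : realType} {d : nat} {f : 'rV[R]_d -> R}.
Hypothesis df : forall z, differentiable f z.
Variables z w : 'rV[R]_d.
Local Notation fw := (fun c : R => f (z + c *: w)).

Lemma is_derive_line (t : R) : is_derive t 1 fw ('D_w f (z + t *: w)).
Proof.
have shift_line : (fun h : R => h^-1 *: ((fw \o shift t) (h *: 1) - fw t)) =
    (fun h : R => h^-1 *: ((f \o shift (z + t *: w)) (h *: w) - f (z + t *: w))).
  apply/funext => h /=; congr (_ *: (f _ - _)).
  by rewrite /shift /= [h%:A]mulr1 scalerDl addrCA.
by split; rewrite /derivable /derive shift_line //; apply: diff_derivable.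
Qed.

Lemma mvt_line {a b : R} : a < b -> exists2 c, c \in `]a, b[ &
  fw b - fw a = 'D_w f (z + c *: w) * (b - a).
Proof.
move=> ab; apply: MVT => // [t _|]; first exact: is_derive_line.
by apply: derivable_within_continuous => t _; case: (is_derive_line t).
Qed.

Lemma line_increment_le {a b K : R} :
  {in `[a, b], forall c, `|'D_w f (z + c *: w)| <= K} ->
  {in `[a, b] &, forall c1 c2, `|fw c2 - fw c1| <= K * `|c2 - c1|}.
Proof.
move=> DK; have inc c1 c2 : c1 \in `[a, b] -> c2 \in `[a, b] -> c1 < c2 ->
    `|fw c2 - fw c1| <= K * `|c2 - c1|.
  rewrite !in_itv /= => /andP[ac1 _] /andP[_ c2b] c12.
  have [c /[!in_itv] /= /andP[c1c cc2] ->] := mvt_line c12.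
  rewrite normrM ler_wpM2r // DK // in_itv /=.
  by rewrite (le_trans ac1 (ltW c1c)) (le_trans (ltW cc2) c2b).
move=> c1 c2 c1i c2i; have [c12|c21|->] := ltgtP c1 c2; first exact: inc.
  by rewrite distrC [`|c2 - c1|]distrC inc.
by rewrite !subrr normr0 mulr0.
Qed.

Lemma line_increment_ge {a b K : R} : a <= b ->
  {in `[a, b], forall c, K <= `|'D_w f (z + c *: w)|} ->
  K * (b - a) <= `|fw b - fw a|.
Proof.
rewrite le_eqVlt => /orP[/eqP-> _|ab DK]; first by rewrite !subrr normr0 mulr0.
have [c /[!in_itv] /= /andP[ac cb] ->] := mvt_line ab.
have ba_ge0 : 0 <= b - a by rewrite subr_ge0 ltW.
by rewrite normrM [`|b - a|]ger0_norm // ler_wpM2r // DK // in_itv /= !ltW.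
Qed.

Lemma line_injective {a b : R} : {in `[a, b], forall c, 'D_w f (z + c *: w) != 0} ->
  {in `[a, b] &, injective fw}.
Proof.
move=> D0; have neq c1 c2 : c1 \in `[a, b] -> c2 \in `[a, b] -> c1 < c2 -> fw c1 != fw c2.
  rewrite !in_itv /= => /andP[ac1 _] /andP[_ c2b] c12.
  have [c /[!in_itv] /= /andP[c1c cc2] E] := mvt_line c12.
  rewrite eq_sym -subr_eq0 E mulf_neq0 //; last by rewrite subr_eq0 gt_eqF.
  by apply: D0; rewrite in_itv /= (le_trans ac1 (ltW c1c)) (le_trans (ltW cc2) c2b).
move=> c1 c2 c1i c2i E; have [c12|c21|//] := ltgtP c1 c2.
  by have := neq _ _ c1i c2i c12; rewrite E eqxx.
by have := neq _ _ c2i c1i c21; rewrite E eqxx.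
Qed.

End IncrementsAlongLines.

Lemma unit_interval_chain (R : realType) (J : R -> R -> Prop) :
  (forall a b c, a <= b -> b <= c -> J a b -> J b c -> J a c) ->
  (forall t, 0 <= t <= 1 ->
     exists2 r, 0 < r & forall a b, a <= t <= b -> b - a < r -> J a b) ->
  J 0 1.
Proof.
move=> J_trans J_loc; pose S := [set s | 0 <= s <= 1 /\ J 0 s].
have S0 : S 0.
  have [r r_gt0 Jr] := J_loc 0 (ltac:(by rewrite lexx ler01)).
  by split; [rewrite lexx ler01 | apply: Jr; rewrite ?lexx ?subrr].
have S_sup : has_sup S by split; [exists 0 | exists 1 => s [/andP[]]].
set m := sup S.
have m_ge0 : 0 <= m by apply: sup_upper_bound.
have m_le1 : m <= 1 by apply: ge_sup; [exists 0 | move=> s [/andP[]]].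
have [r r_gt0 Jm] := J_loc m (ltac:(by rewrite m_ge0 m_le1)).
have J0m : J 0 m.
  have [e Se me] := sup_adherent r_gt0 S_sup.
  have em : e <= m := sup_upper_bound S_sup Se.
  case: Se => /andP[e_ge0 _] J0e.
  apply: (J_trans 0 e m) => //; apply: Jm; first by rewrite em lexx.
  by rewrite -/m in me; lra.
have [m_ge1|m_lt1] := lerP 1 m.
  by suff <- : m = 1 by []; apply/le_anti; rewrite m_le1 m_ge1.
pose b := Num.min 1 (m + r / 2).
have mb : m < b by rewrite lt_min m_lt1 ltrDl divr_gt0.
have : S b.
  split; first by rewrite ge_min lexx /= le_min ler01 addr_ge0 // ltW // divr_gt0.
  apply: (J_trans 0 m b) => //; first exact: ltW.
  apply: Jm; first by rewrite lexx ltW.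
  have : b <= m + r / 2 by rewrite ge_min lexx orbT.
  lra.
by move=> /(sup_upper_bound S_sup); rewrite -/m leNgt mb.
Qed.

Section Segment.
Context {R : realType} {d : nat} (Th : set 'rV[R]_d) (x u : 'rV[R]_d) (del : R).
Hypothesis del_gt0 : 0 < del.
Local Notation en := (@eucl_norm R d).
Local Notation P t := (x + t *: u).

Definition locally_joinable (t0 : R) := exists2 r, 0 < r &
  forall a b, a <= t0 <= b -> b - a < r -> joinable Th (P a) (P b) ((b - a) * (en u + del)).

Lemma near_segment t0 (v : 'rV[R]_d) {K : R} {Q : set 'rV[R]_d} : 0 <= K ->
  (\forall z \near P t0, Q z) ->
  exists2 r, 0 < r & forall a b, a <= t0 <= b -> b - a < r ->
    forall t c, t \in `[a, b] -> 0 <= c <= K * (b - a) -> Q (P t + c *: v).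
Proof.
move=> K_ge0 /nbhs_normP[e /= e_gt0 eQ]; set M := `|u| + K * `|v|.
have M_ge0 : 0 <= M by rewrite addr_ge0 ?mulr_ge0.
exists (e / (M + 1)); first by rewrite divr_gt0 // ltr_wpDl.
move=> a b /andP[at0 t0b] ba t c /[!in_itv] /= /andP[a_t t_b] /andP[c_ge0 cK].
apply: eQ; rewrite /ball_ /=.
have -> : x + t0 *: u - (x + t *: u + c *: v) = (t0 - t) *: u - c *: v.
  by rewrite opprD addrA; congr (_ - _); rewrite opprD addrACA subrr add0r scalerBl.
apply: le_lt_trans (ler_normB _ _) _; rewrite !normrZ [`|c|]ger0_norm //.
have t0t : `|t0 - t| <= b - a by rewrite ler_norml; apply/andP; split; lra.
move: ba; rewrite ltr_pdivlMr ?ltr_wpDl // => ba.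
apply: le_lt_trans ba; rewrite mulrDr mulr1 /M mulrDr mulrA (mulrC _ K).
have uv_ge0 : 0 <= `|u| /\ 0 <= `|v| by split; apply: normr_ge0.
nra.
Qed.

Lemma near_segment0 {t0 : R} {Q : set 'rV[R]_d} : (\forall z \near P t0, Q z) ->
  exists2 r, 0 < r & forall a b, a <= t0 <= b -> b - a < r ->
    {in `[a, b], forall t, Q (P t)}.
Proof.
move=> /(near_segment t0 0 (lexx 0))[r r_gt0 rQ]; exists r => // a b abt0 ba t ti.
by have := rQ a b abt0 ba t 0 ti; rewrite scaler0 addr0 mul0r lexx; apply.
Qed.

Lemma locally_joinable_off t0 : closed Th -> ~ Th (P t0) -> locally_joinable t0.
Proof.
move=> Th_closed nTh.
have nTh_near : \forall z \near P t0, ~ Th z.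
  by apply: open_nbhs_nbhs; split=> //; exact: closed_openC.
have [r r_gt0 rQ] := near_segment0 nTh_near.
exists r => // a b abt0 ba; have ab : a <= b by case/andP: abt0; apply: le_trans.
apply: joinable_line => //.
  by rewrite ler_wpM2l ?subr_ge0 // lerDl ltW.
by move=> c1 c2 c1i _ /(rQ a b abt0 ba c1 c1i).
Qed.

Section Chart.
Context {U : set 'rV[R]_d} {f : 'rV[R]_d -> R}.
Hypotheses (U_open : open U) (f_diff : forall z, differentiable f z)
  (Df_cont : forall w, continuous ('D_w f)) (ThU : Th `&` U = [set z | U z /\ f z = 0]).

Lemma chart_zero {z : 'rV[R]_d} : U z -> Th z -> f z = 0.
Proof. by move=> Uz Tz; have [] : [set z | U z /\ f z = 0] z by rewrite -ThU. Qed.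

Lemma chart_line_hits_once z w (al be : R) :
  {in `[al, be], forall c, U (z + c *: w) /\ 'D_w f (z + c *: w) != 0} ->
  {in `[al, be] &, forall c1 c2, Th (z + c1 *: w) -> Th (z + c2 *: w) -> c1 = c2}.
Proof.
move=> UD c1 c2 c1i c2i T1 T2; apply: (line_injective f_diff z w _ c1 c2 c1i c2i).
  by move=> c /UD[].
by rewrite /= !chart_zero //; [case: (UD _ c2i) | case: (UD _ c1i)].
Qed.

Lemma locally_joinable_transverse {t0 : R} : U (P t0) -> 'D_u f (P t0) != 0 ->
  locally_joinable t0.
Proof.
move=> Ut0 Du0; have UD_near : \forall z \near P t0, U z /\ 'D_u f z != 0.
  near=> z; split; near: z; first exact: open_nbhs_nbhs.
  exact: cvgr_neq0 (Df_cont u _) Du0.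
have [r r_gt0 rQ] := near_segment0 UD_near.
exists r => // a b abt0 ba; have ab : a <= b by case/andP: abt0; apply: le_trans.
apply: joinable_line => //; first by rewrite ler_wpM2l ?subr_ge0 // lerDl ltW.
by apply: chart_line_hits_once; apply: rQ.
Unshelve. all: by end_near.
Qed.

Lemma joinable_detour {t0 : R} (v : 'rV[R]_d) {a b m eps : R} :
  a <= t0 <= b -> a < b -> 0 < m -> 0 < eps ->
  U (P t0) -> Th (P t0) ->
  (forall t c, t \in `[a, b] -> c \in `[0, 2 * eps * (b - a)] ->
     [/\ U (P t + c *: v), m <= `|'D_v f (P t + c *: v)| &
         `|'D_u f (P t + c *: v)| <= eps * m]) ->
  joinable Th (P a) (P b) ((b - a) * (en u + 4 * eps * en v)).
Proof.
move=> abt0 ab m_gt0 eps_gt0 Ut0 Tt0 box; set s := 2 * eps * (b - a).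
have s_gt0 : 0 < s by rewrite !mulr_gt0 // subr_gt0.
have s_in : s \in `[0, s] by rewrite in_itv /= lexx ltW.
have zero_in : 0 \in `[0, s] by rewrite in_itv /= lexx ltW.
have leg t : t \in `[a, b] -> joinable Th (P t) (P t + s *: v) (s * en v).
  move=> ti; have := @joinable_line _ _ Th (P t) v 0 s (s * en v) (ltW s_gt0).
  rewrite scale0r addr0 subr0; apply=> //; apply: chart_line_hits_once => c ci.
  have [Uc mDv _] := box t c ti ci; split=> //.
  by rewrite -normr_gt0 (lt_le_trans m_gt0).
have off_top c : c \in `[a, b] -> ~ Th (P c + s *: v).
  (* going up by s changes f by at least m s = 2 eps m (b - a), whereas
     |f| <= eps m (b - a) on the segment *)
  move=> ci Tc; have [Ucs _ _] := box c s ci s_in.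
  have lower : m * s <= `|f (P c + s *: v) - f (P c)|.
    have := line_increment_ge f_diff (P c) v (ltW s_gt0).
    rewrite scale0r addr0 subr0; apply=> c' c'i; by have [] := box c c' ci c'i.
  have upper : `|f (P c) - f (P t0)| <= eps * m * `|c - t0|.
    apply: (line_increment_le f_diff x u (a := a) (b := b)) => //.
    by move=> c' c'i; have [_ _] := box c' 0 c'i zero_in; rewrite scale0r addr0.
  have ct0 : `|c - t0| <= b - a.
    move: ci abt0; rewrite in_itv /= ler_norml => /andP[? ?] /andP[? ?].
    by apply/andP; split; lra.
  have gap : 0 < eps * m * (b - a) by rewrite !mulr_gt0 // subr_gt0.
  move: lower upper; rewrite (chart_zero Ucs Tc) (chart_zero Ut0 Tt0) sub0r subr0 normrN.
  move=> lower upper; have epsm_ge0 : 0 <= eps * m by rewrite mulr_ge0 ?ltW.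
  have := le_trans lower (le_trans upper (ler_wpM2l epsm_ge0 ct0)).
  by rewrite /s; lra.
have middle : joinable Th (P a + s *: v) (P b + s *: v) ((b - a) * en u).
  rewrite ![P _ + s *: v]addrAC; apply: joinable_line; [exact: ltW | exact: lexx |].
  move=> c1 c2 c1i _ Tc1; exfalso; apply: (off_top c1 c1i).
  by rewrite addrAC.
have ai : a \in `[a, b] by rewrite in_itv /= lexx ltW.
have bi : b \in `[a, b] by rewrite in_itv /= lexx ltW.
have -> : (b - a) * (en u + 4 * eps * en v) = s * en v + (b - a) * en u + s * en v.
  by rewrite /s; ring.
exact: joinable_trans (joinable_trans (leg a ai) middle) (joinable_sym (leg b bi)).
Qed.

Lemma locally_joinable_tangent {t0 : R} {v : 'rV[R]_d} : U (P t0) -> Th (P t0) ->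
  'D_u f (P t0) = 0 -> 'D_v f (P t0) != 0 -> locally_joinable t0.
Proof.
move=> Ut0 Tt0 Du0 Dv0; set m := `|'D_v f (P t0)| / 2.
have m_gt0 : 0 < m by rewrite divr_gt0 ?normr_gt0.
have env_ge0 := eucl_norm_ge0 v.
set eps := del / (4 * (en v + 1)).
have eps_gt0 : 0 < eps by rewrite divr_gt0 // mulr_gt0 // ltr_wpDl.
have box_near : \forall z \near P t0,
    [/\ U z, m <= `|'D_v f z| & `|'D_u f z| <= eps * m].
  near=> z; split; near: z; first exact: open_nbhs_nbhs.
  - apply: (cvgr_norm_ge _ (Df_cont v (P t0))).
    by rewrite /m ltr_pdivrMr // ltr_pMr ?normr_gt0 // ltr1n.
  - by apply: (cvgr_norm_le _ (Df_cont u (P t0))); rewrite Du0 normr0 mulr_gt0.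
have [r r_gt0 rQ] := near_segment t0 v (ltW (mulr_gt0 (ltr0n _ 2) eps_gt0)) box_near.
exists r => // a b abt0 ba.
have [<-|a_neq_b] := eqVneq a b; first by apply: joinable_refl; rewrite subrr mul0r.
have ab : a < b by rewrite lt_neqAle a_neq_b; case/andP: abt0; apply: le_trans.
apply: joinable_le (joinable_detour v abt0 ab m_gt0 eps_gt0 Ut0 Tt0 _) _.
  by move=> t c ti; rewrite in_itv /= => ci; exact: rQ a b abt0 ba t c ti ci.
have ab_ge0 : 0 <= b - a by rewrite subr_ge0 ltW.
rewrite ler_wpM2l // lerD2l.
have -> : 4 * eps * en v = del * (en v / (en v + 1)).
  by rewrite /eps; field; rewrite gt_eqF // ltr_wpDl.
by rewrite ler_piMr ?(ltW del_gt0) // ler_pdivrMr ?ltr_wpDl // mul1r lerDl.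
Unshelve. all: by end_near.
Qed.

End Chart.

Lemma locally_joinable_all t0 : closed Th -> Ck_hypersurface 1 Th -> locally_joinable t0.
Proof.
move=> Th_closed Th_C1; have [Tt0|nTt0] := pselect (Th (P t0)); last first.
  exact: locally_joinable_off.
have [U [f [U_open Ut0 [f_diff Df_cont] [v Dv0] ThU]]] := Th_C1 _ Tt0.
have [Du0|Du0] := eqVneq ('D_u f (P t0)) 0.
  exact: (locally_joinable_tangent U_open f_diff Df_cont ThU Ut0 Tt0 Du0 Dv0).
exact: (locally_joinable_transverse U_open f_diff Df_cont ThU Ut0 Du0).
Qed.

Lemma joinable_segment : closed Th -> Ck_hypersurface 1 Th ->
  joinable Th x (x + u) (en u + del).
Proof.
move=> Th_closed Th_C1.
have := @unit_interval_chain R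
  (fun a b => joinable Th (P a) (P b) ((b - a) * (en u + del))).
rewrite scale0r addr0 scale1r subr0 mul1r; apply=> [a b c _ _ Jab Jbc|t _].
  by have := joinable_trans Jab Jbc; rewrite -mulrDl (addrC (b - a)) addrA subrK.
exact: locally_joinable_all.
Qed.

End Segment.

Theorem lemma3p13 (R : realType) (d : nat) (Theta : set 'rV[R]_d) :
  Ck_hypersurface 3 Theta ->
  (exists eps0 : R, 0 < eps0 /\
     forall x : 'rV[R]_d, (dist_to x Theta < eps0%:E)%E ->
       exists! p, Theta p /\ (eucl_norm (x - p))%:E = dist_to x Theta) ->
  forall (x y : 'rV[R]_d) (eta : R), 0 < eta ->
    exists gamma : R -> 'rV[R]_d,
      [/\ {within `[0, 1], continuous gamma}, gamma 0 = x, gamma 1 = y,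
          (curve_length gamma < (eucl_norm (x - y) + eta)%:E)%E &
          finite_set ([set gamma t | t in `[0, 1]] `&` Theta)].
Proof.
move=> Theta_C3 [eps0 [eps0_gt0 nearest]] x y eta eta_gt0.
have Theta_closed : closed Theta.
  apply: (closed_of_nearest_points eps0_gt0) => z /nearest[p [[Tp pz] _]].
  by exists p.
have Theta_C1 : Ck_hypersurface 1 Theta by apply: Ck_hypersurface_le Theta_C3.
have := joinable_segment Theta x (y - x) _ (divr_gt0 eta_gt0 (ltr0n _ 2))
  Theta_closed Theta_C1.
rewrite addrC subrK => Jxy.
have [g [g_cont g0 g1 g_len g_fin]] := joinable_curve Jxy (divr_gt0 eta_gt0 (ltr0n _ 4)).
exists g; split=> //; apply: le_lt_trans g_len _.
by rewrite lte_fin eucl_distC; lra.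
Qed.
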